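(* For integers $k\ge 0$, $n\ge1$, and variables $\lambda_1,\dots,\lambda_n$, let $$p_k(\lambda_1,\dots,\lambda_n)=(1-\lambda_1)\cdots(1-\lambda_n)\sum_{\alpha\in\mathbb Z_{\ge0}^n,\ 0\le|\alpha|<k}\lambda^\alpha,$$ where $\lambda^\alpha=\lambda_1^{\alpha_1}\cdots\lambda_n^{\alpha_n}$ and $|\alpha|=\alpha_1+\dots+\alpha_n$. For nonnegative integers $m,n,\ell$ put $$a_{mn\ell}=p_m(q^n,q^{n+1},\dots,q^{n+\ell})\in\mathbb Z[q].$$ Then $a_{mn\ell}=a_{nm\ell}$. *)

From mathcomp Require Import all_boot all_order all_algebra.
Set Implicit Arguments. Unset Strict Implicit. Unset Printing Implicit Defensive.
Import GRing.Theory.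
Local Open Scope ring_scope.

(* Since |alpha| < k forces each alpha_i < k, alpha ranges over {ffun 'I_N -> 'I_k}
   with the constraint |alpha| < k. *)
Definition pk (R : comNzRingType) (N k : nat) (lam : 'I_N -> R) : R :=
  (\prod_(i < N) (1 - lam i)) *
  \sum_(alpha : {ffun 'I_N -> 'I_k} | (\sum_(i < N) (alpha i : nat) < k)%N)
     \prod_(i < N) lam i ^+ (alpha i).

Definition a_mnl (m n l : nat) : {poly int} :=
  pk m (fun i : 'I_l.+1 => 'X^(n + i)).

From mathcomp Require Import all_boot all_order all_algebra.
From mathcomp Require Import zify ring.
Set Implicit Arguments. Unset Strict Implicit. Unset Printing Implicit Defensive.
Import GRing.Theory.
Local Open Scope ring_scope.

(* Write (x; q)_l = (1 - x)(1 - xq)...(1 - xq^(l-1)).  Summing the monomials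
   lambda^alpha by degree d, those of degree d in q^n, ..., q^(n+l) add up to
   q^(nd) [d+l choose l]_q, and (q; q)_l [d+l choose l]_q = (q^(d+1); q)_l, so
     (q; q)_l a_mnl = sum_(j < m) (q^n; q)_(l+1) q^(nj) (q^(j+1); q)_l.
   Each summand telescopes in n to sum_(k < n) e(j, k) with e symmetric in j
   and k, so (q; q)_l a_mnl is symmetric in m and n, and (q; q)_l != 0. *)

Section FfunCons.
Variables (T : finType) (N : nat).

Definition ffun_cons (x : T) (g : {ffun 'I_N -> T}) : {ffun 'I_N.+1 -> T} :=
  [ffun i => if unlift ord0 i is Some j then g j else x].

Lemma ffun_cons0 x g : ffun_cons x g ord0 = x.
Proof. by rewrite ffunE unlift_none. Qed.

Lemma ffun_consS x g i : ffun_cons x g (lift ord0 i) = g i.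
Proof. by rewrite ffunE liftK. Qed.

Lemma big_ffun_cons (R : nmodType) (P : pred {ffun 'I_N.+1 -> T})
    (F : {ffun 'I_N.+1 -> T} -> R) :
  \sum_(f | P f) F f =
  \sum_(x : T) \sum_(g : {ffun 'I_N -> T} | P (ffun_cons x g)) F (ffun_cons x g).
Proof.
rewrite pair_big_dep /=.
rewrite (reindex (fun p : T * {ffun 'I_N -> T} => ffun_cons p.1 p.2)) /=.
  by apply: eq_bigl => -[x g].
apply: onW_bij.
exists (fun f : {ffun 'I_N.+1 -> T} => (f ord0, [ffun j => f (lift ord0 j)])).
  move=> [x g] /=; rewrite ffun_cons0; congr pair.
  by apply/ffunP => j; rewrite ffunE ffun_consS.
move=> f; apply/ffunP => i; rewrite ffunE.
by case: unliftP => [j ->|->] //; rewrite ffunE.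
Qed.

End FfunCons.

Section TruncatedMonomialSums.
Variable R : comNzRingType.

(* [msum_lt N lam b] is the sum of lam^alpha over alpha : 'I_N -> nat with
   |alpha| < b, computed by splitting off the exponent of lam 0. *)
Fixpoint msum_lt (N : nat) (lam : nat -> R) (b : nat) : R :=
  match N with
  | 0 => (0 < b)%N%:R
  | N'.+1 => \sum_(a < b) lam 0%N ^+ a * msum_lt N' (fun i => lam i.+1) (b - a)
  end.

Lemma eq_msum_lt N (lam lam' : nat -> R) b :
  lam =1 lam' -> msum_lt N lam b = msum_lt N lam' b.
Proof.
elim: N lam lam' b => [//|N IH] lam lam' b eq_lam /=.
by apply: eq_bigr => a _; rewrite eq_lam (IH _ (fun i => lam' i.+1)).
Qed.

Lemma msum_lt0 N lam : msum_lt N lam 0 = 0.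
Proof. by case: N => [|N] /=; rewrite ?big_ord0. Qed.

Lemma msum_ltS N lam b :
  msum_lt N.+1 lam b.+1 =
  msum_lt N (fun i => lam i.+1) b.+1 + lam 0%N * msum_lt N.+1 lam b.
Proof.
rewrite /= big_ord_recl /= expr0 mul1r subn0; congr (_ + _).
by rewrite mulr_sumr; apply: eq_bigr => a _; rewrite subSS exprS mulrA.
Qed.

Lemma sum_ffun_cons k N (x : 'I_k) (g : {ffun 'I_N -> 'I_k}) :
  (\sum_(i < N.+1) ffun_cons x g i = x + \sum_(i < N) g i)%N.
Proof.
by rewrite big_ord_recl ffun_cons0; congr addn; apply: eq_bigr => i _; rewrite ffun_consS.
Qed.

Lemma prod_ffun_cons (lam : nat -> R) k N (x : 'I_k) (g : {ffun 'I_N -> 'I_k}) :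
  \prod_(i < N.+1) lam i ^+ ffun_cons x g i =
  lam 0%N ^+ x * \prod_(i < N) lam i.+1 ^+ g i.
Proof.
rewrite big_ord_recl ffun_cons0; congr (_ * _).
by apply: eq_bigr => i _; rewrite ffun_consS.
Qed.

(* Exponents bounded by k suffice as soon as the degree bound b is at most k. *)
Lemma sum_ffun_msum_lt N k b (lam : nat -> R) : (b <= k)%N ->
  \sum_(alpha : {ffun 'I_N -> 'I_k} | (\sum_(i < N) alpha i < b)%N)
      \prod_(i < N) lam i ^+ alpha i = msum_lt N lam b.
Proof.
elim: N lam b => [|N IH] lam b le_bk.
  under eq_bigl do rewrite big_ord0.
  case: b le_bk => [|b] _ /=; first by rewrite big_pred0.
  under eq_bigr do rewrite big_ord0.
  by rewrite sumr_const card_ffun !card_ord expn0.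
rewrite big_ffun_cons /=.
rewrite (big_ord_widen _ (fun x => lam 0%N ^+ x * msum_lt N (fun i => lam i.+1) (b - x)) le_bk).
rewrite [RHS]big_mkcond /=; apply: eq_bigr => x _.
under eq_bigl do rewrite sum_ffun_cons -ltn_subRL.
under eq_bigr do rewrite prod_ffun_cons.
rewrite -mulr_sumr (IH (fun i => lam i.+1)); last exact: leq_trans (leq_subr _ _) le_bk.
by case: ltnP => // /eqP ->; rewrite msum_lt0 mulr0.
Qed.

End TruncatedMonomialSums.

Section QPochhammer.
Variables (R : comNzRingType) (q : R).

Definition qpoch (x l : nat) : R := \prod_(i < l) (1 - q ^+ (x + i)).

Lemma qpochSr x l : qpoch x l.+1 = qpoch x l * (1 - q ^+ (x + l)).
Proof. by rewrite /qpoch big_ord_recr. Qed.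

Lemma qpochSl x l : qpoch x l.+1 = (1 - q ^+ x) * qpoch x.+1 l.
Proof.
rewrite /qpoch big_ord_recl addn0; congr (_ * _).
by apply: eq_bigr => i _; rewrite addnS.
Qed.

(* (q; q)_l times sum_(j < m) q^(nj) [j+l choose l]_q. *)
Definition qpoch_sum (l m n : nat) : R := \sum_(j < m) q ^+ (n * j) * qpoch j.+1 l.

Lemma qpoch_sumS l m n :
  qpoch_sum l m.+1 n = qpoch_sum l m n + q ^+ (n * m) * qpoch m.+1 l.
Proof. by rewrite /qpoch_sum big_ord_recr. Qed.

(* The Pascal-type recursion of the q-binomials, summed over j. *)
Lemma qpoch_sum_rec l m n :
  qpoch_sum l.+1 m.+1 n =
  (1 - q ^+ l.+1) * qpoch_sum l m.+1 n.+1 + q ^+ n * qpoch_sum l.+1 m n.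
Proof.
elim: m => [|m IH].
  rewrite /qpoch_sum !big_ord_recr !big_ord0 /= !muln0 expr0 qpochSr add1n; ring.
rewrite (qpoch_sumS l.+1 m.+1) {1}IH (qpoch_sumS l.+1 m) (qpoch_sumS l m.+1).
rewrite qpochSr (qpochSl m.+1 l).
have -> : q ^+ (n.+1 * m.+1) = q ^+ (n * m.+1) * q ^+ m.+1 by rewrite mulSn exprD mulrC.
have <- : q ^+ n * q ^+ (n * m) = q ^+ (n * m.+1) by rewrite -exprD mulnS.
have -> : q ^+ (m.+2 + l) = q ^+ m.+1 * q ^+ l.+1 by rewrite -exprD addnS.
ring.
Qed.

Lemma qpoch_mul_msum_lt l n m :
  qpoch 1 l * msum_lt l.+1 (fun i => q ^+ (n + i)) m = qpoch_sum l m n.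
Proof.
elim: l n m => [|l IHl] n m.
  rewrite /qpoch big_ord0 mul1r /qpoch_sum /=; apply: eq_bigr => j _.
  by rewrite subn_gt0 ltn_ord mulr1 /qpoch big_ord0 mulr1 addn0 exprM.
elim: m => [|m IHm]; first by rewrite msum_lt0 mulr0 /qpoch_sum big_ord0.
rewrite msum_ltS (@eq_msum_lt _ _ _ (fun i => q ^+ (n.+1 + i))); last first.
  by move=> i; rewrite addnS.
rewrite mulrDr [X in _ + X]mulrCA IHm qpochSr (mulrC (qpoch 1 l)) -mulrA IHl.
by rewrite qpoch_sum_rec addn0 add1n.
Qed.

Definition sym_term (l j k : nat) : R :=
  qpoch j.+1 l * qpoch k.+1 l * q ^+ (j * k) *
  (q ^+ j + q ^+ k - 1 - q ^+ (j + k + l.+1)).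

Lemma sym_termC l j k : sym_term l j k = sym_term l k j.
Proof. rewrite /sym_term mulnC (addnC j k); ring. Qed.

Lemma qpoch_mul_qpoch_sum_term l j n :
  qpoch n l.+1 * (q ^+ (n * j) * qpoch j.+1 l) = \sum_(k < n) sym_term l j k.
Proof.
elim: n => [|n IH].
  by rewrite big_ord0 /qpoch big_ord_recl add0n expr0 subrr !mul0r.
rewrite big_ord_recr /= -IH /sym_term qpochSr (qpochSl n).
have -> : q ^+ (n.+1 * j) = q ^+ j * q ^+ (n * j) by rewrite mulSn exprD.
have -> : q ^+ (j + n + l.+1) = q ^+ j * q ^+ (n.+1 + l).
  by rewrite -exprD; congr (_ ^+ _); lia.
rewrite (mulnC j n); ring.
Qed.

Lemma qpoch_mul_qpoch_sum l m n :
  qpoch n l.+1 * qpoch_sum l m n = \sum_(j < m) \sum_(k < n) sym_term l j k.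
Proof.
rewrite /qpoch_sum mulr_sumr; apply: eq_bigr => j _.
exact: qpoch_mul_qpoch_sum_term.
Qed.

End QPochhammer.

Lemma qpochX_neq0 l : qpoch ('X : {poly int}) 1 l != 0.
Proof.
apply/prodf_neq0 => i _; apply/negP => /eqP/(congr1 (horner^~ 0)).
by rewrite /= !hornerE add1n exprS mul0r subr0 => /eqP; rewrite oner_eq0.
Qed.

Lemma qpoch_mul_a_mnl l m n :
  qpoch 'X 1 l * a_mnl m n l = \sum_(j < m) \sum_(k < n) sym_term 'X l j k.
Proof.
rewrite /a_mnl /pk (sum_ffun_msum_lt _ (fun i => 'X^(n + i)) (leqnn m)).
by rewrite mulrCA qpoch_mul_msum_lt -qpoch_mul_qpoch_sum.
Qed.

Theorem lemma6p1 (m n l : nat) : a_mnl m n l = a_mnl n m l.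
Proof.
apply: (mulfI (qpochX_neq0 l)); rewrite !qpoch_mul_a_mnl exchange_big /=.
by apply: eq_bigr => j _; apply: eq_bigr => k _; rewrite sym_termC.
Qed.
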